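(* Let $p$ be any probability distribution on $\mathbb{N}$, let $\delta>0$ and let $k\ge2$ be an integer. Let $X_1^n$ be generated i.i.d. with marginal $p$ and let $q=q(X^n)$ be the empirical distribution of $X_1^n$. Then \[p\Big(|q(X^n)-p|_1>\delta\ \text{ and }\ 2F_q^{-1}(1-\delta/6)\le k\Big)\le(2^k-2)\exp\Big(-\frac{n\delta^2}{18}\Big).\]
   Context: $|\cdot|_1$ is the $\ell_1$ distance. For a distribution $r$ on $\mathbb{N}$, the (non-standard) cumulative distribution function $F_r:\mathbb{R}^+\cup\{\infty\}\to[0,1]$ is defined as the usual CDF $F_r(y)=r(\{0,\ldots,y\})$ at support points $y$ of $r$, by linear interpolation between consecutive support points, and $F_r(\infty)=1$; $F_r^{-1}:[0,1]\to\mathbb{R}^+\cup\{\infty\}$ is its inverse, with $F_r^{-1}(x)=0$ for $0\le x<F_r(0)$, $F_r^{-1}(1)=\infty$ if $r$ has infinite support, and otherwise $F_r^{-1}(1)$ the smallest natural number $y$ with $F_r(y)=1$. *)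

From HB Require Import structures.
From mathcomp Require Import all_boot all_order all_algebra.
From mathcomp Require Import all_classical all_reals all_analysis.
Set Implicit Arguments. Unset Strict Implicit. Unset Printing Implicit Defensive.
Import Order.TTheory GRing.Theory Num.Theory.
Local Open Scope classical_set_scope.
Local Open Scope ring_scope.

Section Defs.
Variable R : realType.

Definition is_distr (p : nat -> R) : Prop :=
  (forall i, 0 <= p i) /\ (\esum_(i in [set: nat]) (p i)%:E = 1%E).

Definition cdf_nat (r : nat -> R) (y : nat) : R := \sum_(0 <= i < y.+1) r i.

Definition interp_pt (r : nat -> R) (i : nat) : bool := (i == 0)%N || (0 < r i).

Definition pt_below (r : nat -> R) (y : R) : nat :=
  \max_(i < (Num.truncn y).+1 | interp_pt r i) (i : nat).

(* The non-standard CDF F_r on R^+: usual CDF at (0 and) support points,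
   linear interpolation between consecutive such points, and constant
   (= F_r at the last support point) beyond the last support point. *)
Definition Fcdf (r : nat -> R) (y : R) : R :=
  let a := pt_below r y in
  match pselect (exists j, interp_pt r j && (y < j%:R)) with
  | left H =>
      let b := ex_minn H in
      cdf_nat r a + (y - a%:R) / (b%:R - a%:R) * (cdf_nat r b - cdf_nat r a)
  | right _ => cdf_nat r a
  end.

Definition Finv (r : nat -> R) (x : R) : \bar R :=
  if x < Fcdf r 0 then 0%E
  else if x == 1 then
    match pselect (exists y : nat, Fcdf r y%:R == 1) with
    | left H => ((ex_minn H)%:R)%:E
    | right _ => +oo%E
    end
  else (inf [set y : R | 0 <= y /\ Fcdf r y = x])%:E.

Definition empirical (n : nat) (x : n.-tuple nat) (y : nat) : R :=
  (count (pred1 y) x)%:R / n%:R.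

Definition l1dist (q p : nat -> R) : \bar R :=
  \esum_(y in [set: nat]) (`|q y - p y|)%:E.

Definition iid_prob (p : nat -> R) (n : nat) (E : set (n.-tuple nat)) : \bar R :=
  \esum_(x in E) (\prod_(i < n) p (tnth x i))%:E.

End Defs.

Arguments is_distr {R}.
Arguments cdf_nat {R}.
Arguments interp_pt {R}.
Arguments pt_below {R}.
Arguments Fcdf {R}.
Arguments Finv {R}.
Arguments empirical {R n}.
Arguments l1dist {R}.
Arguments iid_prob {R} p {n}.

From HB Require Import structures.
From mathcomp Require Import all_boot all_order all_algebra.
From mathcomp Require Import all_classical all_reals all_analysis.
From mathcomp Require Import ring lra zify.
Import Order.TTheory GRing.Theory Num.Theory.
Local Open Scope classical_set_scope.
Local Open Scope ring_scope.

(* The empirical distribution q of the sample has finite support, and F_q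
   interpolates linearly between consecutive support points. Hence
   2 F_q^{-1}(1 - delta/6) <= k forces the mass of q beyond k - 1 to be at most
   delta/3, and at most delta/6 when q charges every point below k. Together
   with |q - p|_1 > delta, this makes the excess q(A) - p(A) exceed delta/6 on
   some nonempty proper subset A of {0, ..., k-1}. For each of these 2^k - 2
   sets, the number of samples in A exceeds its mean n p(A) by n delta/6 with
   probability at most exp(-2 n (delta/6)^2) (Chernoff bound with Hoeffding's
   lemma), and a union bound concludes. *)

Set Implicit Arguments. Unset Strict Implicit.

Lemma ler_add_small (R : realFieldType) (x y : R) :
  (forall e, 0 < e -> e <= 1/2 -> x <= y + e) -> x <= y.
Proof.
move=> le_xy; apply/ler_addgt0Pr => e e_gt0.
have m_gt0 : 0 < Num.min e (1/2) by rewrite lt_min e_gt0 /=; lra.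
have m_le : Num.min e (1/2) <= 1/2 by rewrite ge_min lexx orbT.
apply: (le_trans (le_xy _ m_gt0 m_le)).
by rewrite lerD2l ge_min lexx.
Qed.

Lemma ler0_is_derive_nincry (R : realType) (f f' : R -> R) (a : R) :
  (forall x : R, is_derive x 1 f (f' x)) -> (forall x, a < x -> f' x <= 0) ->
  forall y, a <= y -> f y <= f a.
Proof.
move=> df f'le0 y ay; apply: (@ler0_derive1_nincry _ f a) => //.
- move=> x; rewrite in_itv /= andbT derive1E => ax.
  by have [_ ->] := df x; exact: f'le0.
- by apply: derivable_within_continuous => x _; have [] := df x.
Qed.

Section Hoeffding.
Variables (R : realType) (mu : R).
Hypotheses (mu0 : 0 <= mu) (mu1 : mu <= 1).

Let D (y : R) := 1 - mu + mu * expR y.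

Let D_gt0 (y : R) : 0 < D y.
Proof.
rewrite /D; have := expR_gt0 y => ey.
have [->|mu_lt1] := eqVneq mu 1; first by rewrite subrr add0r mul1r.
have : 0 <= mu * expR y by rewrite mulr_ge0 // ltW.
have : mu < 1 by rewrite lt_neqAle mu_lt1.
lra.
Qed.

Let is_derive_D (y : R) : is_derive y 1 D (mu * expR y).
Proof.
apply: (is_derive_eq (is_deriveD (is_derive_cst (1 - mu) y 1)
  (is_deriveZ mu (is_derive_expR y)))).
by rewrite add0r.
Qed.

(* [g] is the derivative of [ln (D y) - mu y - y^2/8]; it vanishes at [0] and
   is nonincreasing, its derivative [dg] being minus a square. *)
Let g (y : R) := (1 - mu) * (1 - (D y)^-1) - 4^-1 * y.

Let dg (y : R) := (1 - mu) * mu * expR y / D y ^+ 2 - 4^-1.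

Let is_derive_g (y : R) : is_derive y 1 g (dg y).
Proof.
have hD : D y != 0 by rewrite gt_eqF.
apply: (is_derive_eq (is_deriveB (is_deriveZ (1 - mu)
   (is_deriveB (is_derive_cst (1 : R) y 1) (is_deriveV hD (is_derive_D y))))
   (is_deriveZ (4^-1) (is_derive_id y 1)))).
by rewrite /dg /GRing.scale /=; field.
Qed.

Let g_le0 (y : R) : 0 <= y -> g y <= 0.
Proof.
move=> y0; have <- : g 0 = 0.
  by rewrite /g /D expR0 mulr1 subrK invr1 subrr mulr0 mulr0 subrr.
apply: (ler0_is_derive_nincry is_derive_g _ y0) => x _.
have hD : D x != 0 by rewrite gt_eqF.
have -> : dg x = - ((1 - mu - mu * expR x) / (2 * D x)) ^+ 2.
  by rewrite /dg /D in hD *; field.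
by rewrite oppr_le0 sqr_ge0.
Qed.

Lemma bernoulli_mgf_le (s : R) : 0 <= s ->
  1 - mu + mu * expR s <= expR (mu * s + s ^+ 2 / 8).
Proof.
move=> s0; rewrite -/(D s) -[D s]lnK ?posrE // ler_expR [s ^+ 2 / 8]mulrC -subr_le0.
pose f y := ln (D y) - (mu * y + 8^-1 * y ^+ 2).
have df (y : R) : is_derive y 1 f (g y).
  apply: (is_derive_eq (is_deriveB
    (is_derive1_comp (is_derive1_ln (D_gt0 y)) (is_derive_D y))
    (is_deriveD (is_deriveZ mu (is_derive_id y 1))
                (is_deriveZ 8^-1 (is_deriveX 2 (is_derive_id y 1)))))).
  have hD : D y != 0 by rewrite gt_eqF.
  by rewrite /g /GRing.scale /= expr1; rewrite /D in hD *; field.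
have <- : f 0 = 0 by rewrite /f /D expR0 mulr1 subrK ln1 expr0n /= !mulr0 addr0 subrr.
exact: (ler0_is_derive_nincry df (fun x x0 => g_le0 (ltW x0)) s0).
Qed.

End Hoeffding.

Section FiniteDistr.
Variables (R : realType) (r : nat -> R) (M : nat).
Hypotheses (r_ge0 : forall i, 0 <= r i) (r_supp : forall i, (M <= i)%N -> r i = 0)
  (r_sum1 : \sum_(0 <= i < M) r i = 1).

Lemma cdf_nat_ge0 m : 0 <= cdf_nat r m.
Proof. exact: sumr_ge0. Qed.

Lemma le_cdf_nat m m' : (m <= m')%N -> cdf_nat r m <= cdf_nat r m'.
Proof.
move=> le_mm'; rewrite /cdf_nat (@big_cat_nat _ _ _ m.+1 0 m'.+1) //=.
by rewrite lerDl; exact: sumr_ge0.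
Qed.

Lemma sum_distr_ge_supp m : (M <= m)%N -> \sum_(0 <= i < m) r i = 1.
Proof.
move=> le_Mm; rewrite (@big_cat_nat _ _ _ M 0 m) //= r_sum1 big_nat_cond big1 ?addr0 //.
by move=> i /andP[/andP[Mi _] _]; exact: r_supp.
Qed.

Lemma cdf_nat_le1 m : cdf_nat r m <= 1.
Proof.
rewrite -(@sum_distr_ge_supp (maxn M m).+1) ?leqW ?leq_maxl //.
exact/le_cdf_nat/leq_maxr.
Qed.

Lemma pt_below_le y : 0 <= y -> (pt_below r y)%:R <= y.
Proof.
move=> y0; apply: le_trans (_ : (Num.truncn y)%:R <= y); last by rewrite truncn_le.
rewrite ler_nat.
by apply/bigmax_leqP => i _; rewrite -ltnS.
Qed.

Lemma interp_pt_below y : interp_pt r (pt_below r y).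
Proof.
rewrite /pt_below.
have [|i0 Hi0 ->] := @eq_bigmax_cond _ (fun i : 'I_(Num.truncn y).+1 => interp_pt r i)
  (fun i => nat_of_ord i) => //.
by apply/card_gt0P; exists ord0.
Qed.

Lemma pt_below_max y j : 0 <= y -> interp_pt r j -> j%:R <= y -> (j <= pt_below r y)%N.
Proof.
move=> y0 ij jy; have jt : (j < (Num.truncn y).+1)%N by rewrite ltnS truncn_ge_nat.
exact: (@leq_bigmax_cond _ (fun i : 'I_(Num.truncn y).+1 => interp_pt r i)
  (fun i => nat_of_ord i) (Ordinal jt)).
Qed.

Lemma pt_below_nat m : (pt_below r m%:R <= m)%N.
Proof. by rewrite -(ler_nat R) pt_below_le. Qed.

(* No support point lies strictly between [pt_below r m] and [m]. *)
Lemma cdf_nat_pt_below m : cdf_nat r (pt_below r m%:R) = cdf_nat r m.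
Proof.
rewrite /cdf_nat (@big_cat_nat _ _ _ (pt_below r m%:R).+1 0 m.+1) //= ?ltnS ?pt_below_nat //.
rewrite [X in _ + X]big_nat_cond [X in _ + X]big1 ?addr0 // => i /andP[/andP[lt_ai lt_im] _].
apply/eqP; rewrite eq_le r_ge0 andbT leNgt; apply/negP => ri_gt0.
have := @pt_below_max m%:R i (ler0n _ _); rewrite /interp_pt ri_gt0 orbT ler_nat.
by move=> /(_ isT lt_im); rewrite leqNgt lt_ai.
Qed.

Lemma Fcdf_cases y :
  (~ (exists j, interp_pt r j && (y < j%:R)) /\ Fcdf r y = cdf_nat r (pt_below r y)) \/
  (exists b, [/\ interp_pt r b, y < b%:R,
     (forall j, interp_pt r j -> y < j%:R -> (b <= j)%N) &
     Fcdf r y = cdf_nat r (pt_below r y) + (y - (pt_below r y)%:R)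
       / (b%:R - (pt_below r y)%:R) * (cdf_nat r b - cdf_nat r (pt_below r y))]).
Proof.
rewrite /Fcdf; case: pselect => H; [right | by left].
case: (ex_minnP H) => b /andP[ib yb] minb; exists b; split => //.
by move=> j ij yj; apply: minb; rewrite ij yj.
Qed.

Lemma Fcdf0 : Fcdf r 0 = cdf_nat r 0.
Proof.
have pb0 : pt_below r 0 = 0%N by apply/eqP; rewrite -leqn0 -(ler_nat R) pt_below_le.
case: (Fcdf_cases 0) => [[_ ->] | [b [_ _ _ ->]]]; rewrite pb0 //.
by rewrite subrr !mul0r addr0.
Qed.

Lemma Fcdf_interp a b y : interp_pt r a -> interp_pt r b ->
  (forall j, interp_pt r j -> (a < j)%N -> (b <= j)%N) ->
  a%:R <= y -> y < b%:R ->
  Fcdf r y = cdf_nat r a + (y - a%:R) / (b%:R - a%:R) * (cdf_nat r b - cdf_nat r a).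
Proof.
move=> ia ib gap ay yb; have y0 : 0 <= y := le_trans (ler0n _ _) ay.
have pbE : pt_below r y = a.
  apply/eqP; rewrite eqn_leq pt_below_max // andbT leqNgt.
  apply/negP => /(gap _ (interp_pt_below y)).
  by rewrite -(ler_nat R) => le_bpb; have := pt_below_le y0; lra.
case: (Fcdf_cases y) => [[nob _] | [b' [ib' yb' minb' ->]]].
  by case: nob; exists b; rewrite ib yb.
suff -> : b' = b by rewrite pbE.
apply/eqP; rewrite eqn_leq minb' //=; apply: gap => //.
by rewrite -(ltr_nat R); exact: le_lt_trans yb'.
Qed.

Lemma Fcdf_surj x : cdf_nat r 0 <= x -> x < 1 -> exists2 y, 0 <= y & Fcdf r y = x.
Proof.
move=> x_ge x_lt1.
have ex_b : exists b, x < cdf_nat r b by exists M; rewrite /cdf_nat sum_distr_ge_supp.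
case: (ex_minnP ex_b) => b x_lt_b minb.
have b_gt0 : (0 < b)%N by case: b x_lt_b {minb} => // /(le_lt_trans x_ge); rewrite ltxx.
have b_le_x : cdf_nat r b.-1 <= x.
  by rewrite leNgt; apply/negP => /minb; rewrite -{1}(prednK b_gt0) ltnn.
pose a := pt_below r (b.-1)%:R.
have cdf_a : cdf_nat r a = cdf_nat r b.-1 := cdf_nat_pt_below b.-1.
have cdf_b : cdf_nat r b = cdf_nat r b.-1 + r b.
  by rewrite /cdf_nat big_nat_recr //= prednK.
have rb_gt0 : 0 < r b by move: b_le_x x_lt_b; rewrite cdf_b; lra.
have ib : interp_pt r b by rewrite /interp_pt rb_gt0 orbT.
have ab : (a < b)%N by rewrite (leq_ltn_trans (pt_below_nat _)) // prednK.
have abR : a%:R < b%:R :> R by rewrite ltr_nat.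
have gap j : interp_pt r j -> (a < j)%N -> (b <= j)%N.
  move=> ij; apply: contraTT; rewrite -!ltnNge => jb.
  by rewrite ltnS pt_below_max // ler_nat -ltnS prednK.
pose t := (x - cdf_nat r a) / (cdf_nat r b - cdf_nat r a).
have [t0 t1] : 0 <= t /\ t < 1.
  rewrite /t cdf_a cdf_b addrAC subrr add0r ler_pdivlMr ?ltr_pdivrMr; lra.
exists (a%:R + t * (b%:R - a%:R)); first by rewrite addr_ge0 // mulr_ge0 // subr_ge0 ltW.
rewrite (@Fcdf_interp a b) ?interp_pt_below //; last 2 first.
- by rewrite lerDl mulr_ge0 // subr_ge0 ltW.
- by rewrite -ltrBrDl gtr_pMl // subr_gt0.
rewrite addrAC subrr add0r mulrK ?unitfE ?subr_eq0 ?gt_eqF // /t divfK; first by ring.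
by rewrite cdf_a cdf_b addrAC subrr add0r gt_eqF.
Qed.

Section Quantile.
Variable k : nat.
Hypothesis k_ge2 : (2 <= k)%N.

Lemma Fcdf_le_cdf_or_interp y : 0 <= y -> (pt_below r y <= k.-1)%N ->
  Fcdf r y <= cdf_nat r k.-1 \/
  exists b, [/\ (k <= b)%N, interp_pt r b, y < b%:R,
    (forall j, interp_pt r j -> y < j%:R -> (b <= j)%N) &
    Fcdf r y = cdf_nat r (pt_below r y) + (y - (pt_below r y)%:R)
      / (b%:R - (pt_below r y)%:R) * (cdf_nat r b - cdf_nat r (pt_below r y))].
Proof.
move=> y0 a_le; set a := pt_below r y in a_le *.
have ca := le_cdf_nat a_le.
case: (Fcdf_cases y) => [[_ ->] | [b [ib yb minb FE]]]; [by left | rewrite -/a in FE].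
have [b_le | b_gt] := leqP b k.-1; last by right; exists b; rewrite -(prednK (ltnW k_ge2)).
left; rewrite FE; have ab : a%:R < b%:R :> R by apply: le_lt_trans yb; exact: pt_below_le.
have rho1 : (y - a%:R) / (b%:R - a%:R) <= 1 by rewrite ler_pdivrMr ?subr_gt0 // mul1r; lra.
have : cdf_nat r a <= cdf_nat r b by rewrite le_cdf_nat // -(ler_nat R) ltW.
have : 0 <= (y - a%:R) / (b%:R - a%:R).
  by rewrite divr_ge0 // subr_ge0 ?pt_below_le // ltW.
have := le_cdf_nat b_le; nra.
Qed.

Lemma pt_below_le_pred e y : e <= 1/2 -> 0 <= y -> y < k%:R / 2 + e ->
  (pt_below r y <= k.-1)%N.
Proof.
move=> e_le y0 y_lt; have k2 : 2 <= k%:R :> R by rewrite ler_nat.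
have : (pt_below r y)%:R < k%:R :> R by have := pt_below_le y0; lra.
by rewrite ltr_nat; lia.
Qed.

Lemma one_sub_Fcdf_ge e y : 0 < e -> e <= 1/2 -> 0 <= y -> y < k%:R / 2 + e ->
  (1 - cdf_nat r k.-1) * (1/2 - e / k%:R) <= 1 - Fcdf r y.
Proof.
move=> e_gt0 e_le y0 y_lt; have k2 : 2 <= k%:R :> R by rewrite ler_nat.
have a_le := pt_below_le_pred e_le y0 y_lt.
have c_le1 := cdf_nat_le1 k.-1.
have ek0 : 0 <= e / k%:R by rewrite divr_ge0 // ltW.
have ek1 : e / k%:R <= 1/4 by rewrite ler_pdivrMr; lra.
case: (Fcdf_le_cdf_or_interp y0 a_le) => [Fy_le | [b [kb ib yb _ ->]]].
  by rewrite -subr_ge0; nra.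
set a := pt_below r y in a_le *.
have ay : a%:R <= y := pt_below_le y0.
have ca : cdf_nat r a <= cdf_nat r k.-1 := le_cdf_nat a_le.
have ca0 := cdf_nat_ge0 a; have cb1 := cdf_nat_le1 b.
have ab : a%:R < b%:R :> R by lra.
have kbR : k%:R <= b%:R :> R by rewrite ler_nat.
set rho := (y - a%:R) / (b%:R - a%:R).
have rho0 : 0 <= rho by rewrite divr_ge0 //; lra.
(* [y < tau k <= tau b], so [y] lies at relative position at most [tau] in [[a, b]]. *)
set tau := 1/2 + e / k%:R.
have tau0 : 0 <= tau by rewrite /tau; lra.
have tau1 : tau <= 1 by rewrite /tau; lra.
have rho_tau : rho <= tau.
  rewrite ler_pdivrMr ?subr_gt0 //.
  have : tau * k%:R = k%:R / 2 + e by rewrite /tau; field; lra.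
  have : tau * k%:R <= tau * b%:R by rewrite ler_wpM2l.
  have : tau * a%:R <= a%:R by rewrite ler_piMl.
  rewrite mulrBr; lra.
have : rho * (cdf_nat r b - cdf_nat r a) <= rho * (1 - cdf_nat r a) by rewrite ler_wpM2l //; lra.
have : (1/2 - e / k%:R) * (1 - cdf_nat r k.-1) <= (1 - rho) * (1 - cdf_nat r a).
  by rewrite /tau in rho_tau; apply: ler_pM; lra.
lra.
Qed.

Lemma Fcdf_le_cdf_add e y : 0 < e -> e <= 1/2 -> 0 <= y -> y < k%:R / 2 + e ->
  (forall j, (j < k)%N -> 0 < r j) -> Fcdf r y <= cdf_nat r k.-1 + e.
Proof.
move=> e_gt0 e_le y0 y_lt r_gt0; have k2 : 2 <= k%:R :> R by rewrite ler_nat.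
have a_le := pt_below_le_pred e_le y0 y_lt.
case: (Fcdf_le_cdf_or_interp y0 a_le) => [Fy_le | [b [kb ib yb minb ->]]].
  lra.
set a := pt_below r y in a_le *.
have ay : a%:R <= y := pt_below_le y0.
have ik : interp_pt r k.-1 by rewrite /interp_pt r_gt0 ?orbT // prednK // ltnW.
have ky : (k.-1)%:R <= y.
  by rewrite leNgt; apply/negP => /(minb _ ik); have := k_ge2; lia.
have aE : a = k.-1 by apply/eqP; rewrite eqn_leq a_le pt_below_max.
have kE : k%:R = (k.-1)%:R + 1 :> R by rewrite natr1 prednK // ltnW.
have ba1 : 1 <= b%:R - a%:R :> R by rewrite aE; move: kb; rewrite -(ler_nat R); lra.
set rho := (y - a%:R) / (b%:R - a%:R).
(* [b - a >= 1] as both are integers, so [rho <= y - (k - 1) < e]. *)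
have rho_le : rho <= y - a%:R.
  by rewrite ler_pdivrMr ?ler_peMr //; lra.
have : 0 <= rho by rewrite divr_ge0 //; lra.
have := le_cdf_nat (leq_trans (leq_pred k) kb); have := cdf_nat_le1 b; have := cdf_nat_ge0 a.
rewrite aE in rho_le *; nra.
Qed.

Lemma Fcdf_near_Finv x e : cdf_nat r 0 <= x -> x < 1 ->
  (2%:E * Finv r x <= k%:R%:E)%E -> 0 < e ->
  exists y, [/\ 0 <= y, y < k%:R / 2 + e & Fcdf r y = x].
Proof.
move=> x_ge x_lt1; rewrite /Finv Fcdf0 ltNge x_ge /= lt_eqF //= -EFinM lee_fin => Finv_le e_gt0.
have [y0 y00 Fy0] := Fcdf_surj x_ge x_lt1.
have hS : has_inf [set y : R | 0 <= y /\ Fcdf r y = x].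
  by split; [exists y0 | exists 0 => z []].
have [y [y_ge0 Fy] y_lt] := inf_adherent e_gt0 hS.
by exists y; split => //; lra.
Qed.

Lemma tail_le_Finv x : x < 1 -> (2%:E * Finv r x <= k%:R%:E)%E ->
  1 - cdf_nat r k.-1 <= 2 * (1 - x).
Proof.
move=> x_lt1 Finv_le; have c_le1 := cdf_nat_le1 k.-1.
have [x_lt | x_ge] := ltP x (cdf_nat r 0).
  by have := le_cdf_nat (leq0n k.-1); lra.
apply: ler_add_small => e e_gt0 e_le.
have [y [y0 y_lt Fy]] := Fcdf_near_Finv x_ge x_lt1 Finv_le e_gt0.
have := one_sub_Fcdf_ge e_gt0 e_le y0 y_lt; rewrite Fy.
have k2 : 2 <= k%:R :> R by rewrite ler_nat.
have : e / k%:R <= e / 2 by rewrite ler_pdivrMr; nra.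
have : 0 <= e / k%:R by rewrite divr_ge0 // ltW.
have := cdf_nat_ge0 k.-1; nra.
Qed.

Lemma le_cdf_Finv x : x < 1 -> (2%:E * Finv r x <= k%:R%:E)%E ->
  (forall j, (j < k)%N -> 0 < r j) -> x <= cdf_nat r k.-1.
Proof.
move=> x_lt1 Finv_le r_gt0.
have [x_lt | x_ge] := ltP x (cdf_nat r 0).
  by have := le_cdf_nat (leq0n k.-1); lra.
apply: ler_add_small => e e_gt0 e_le.
have [y [y0 y_lt <-]] := Fcdf_near_Finv x_ge x_lt1 Finv_le e_gt0.
exact: Fcdf_le_cdf_add.
Qed.

End Quantile.

End FiniteDistr.

Lemma ler_sum_subset (R : numDomainType) (T : eqType) (s1 s2 : seq T) (f : T -> R) :
  uniq s1 -> uniq s2 -> {subset s1 <= s2} -> (forall x, 0 <= f x) ->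
  \sum_(x <- s1) f x <= \sum_(x <- s2) f x.
Proof.
move=> u1 u2 sub f_ge0.
have P : perm_eq s1 [seq x <- s2 | x \in s1].
  apply: uniq_perm => //; first exact: filter_uniq.
  by move=> z; rewrite mem_filter; case: (boolP (z \in s1)) => // /sub ->.
rewrite (perm_big _ P) big_filter [X in _ <= X](bigID (mem s1)) /= lerDl.
exact: sumr_ge0.
Qed.

Lemma sum_tuple_prod_le (R : realDomainType) (f : nat -> R) (n N : nat)
    (s : seq (n.-tuple nat)) :
  (forall a, 0 <= f a) -> uniq s -> (forall x, x \in s -> forall i, (tnth x i <= N)%N) ->
  \sum_(x <- s) \prod_(i < n) f (tnth x i) <= (\sum_(a < N.+1) f a) ^+ n.
Proof.
move=> f_ge0 s_uniq s_le.
rewrite -[n in _ ^+ n]card_ord -prodr_const bigA_distr_bigA /=.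
pose h (x : n.-tuple nat) : {ffun 'I_n -> 'I_N.+1} := [ffun i => inord (tnth x i)].
have hK x : x \in s -> forall i, val (h x i) = tnth x i.
  by move=> xs i; rewrite ffunE /= inordK // ltnS s_le.
rewrite (eq_big_seq (fun x => \prod_(i < n) f (h x i))); last first.
  by move=> x xs; apply: eq_bigr => i _; rewrite hK.
rewrite -(big_map h predT (fun g => \prod_(i < n) f (g i))) -big_enum /=.
apply: ler_sum_subset => //; last by move=> g; exact: prodr_ge0.
- rewrite map_inj_in_uniq // => x y xs ys hxy; apply: eq_from_tnth => i.
  by rewrite -!hK // hxy.
- exact: enum_uniq.
- by move=> g _; rewrite mem_enum.
Qed.

Lemma sum_count_mem (s I : seq nat) : uniq I ->
  (\sum_(i <- I) count (pred1 i) s)%N = count (mem I) s.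
Proof.
move=> uI; elim: s => [|a s IH] /=; first by rewrite big1.
rewrite big_split /= IH; congr (_ + _)%N.
rewrite -(count_uniq_mem a uI) -sum1_count [RHS]big_mkcond /=.
by apply: eq_bigr => i _; rewrite eq_sym; case: (a == i).
Qed.

Section Chernoff.
Variables (R : realType) (p : nat -> R) (n : nat) (I : seq nat) (t : R).
Hypotheses (p_ge0 : forall i, 0 <= p i) (p_sum_le1 : forall N, \sum_(0 <= i < N) p i <= 1)
  (n_gt0 : (0 < n)%N) (I_uniq : uniq I) (t_gt0 : 0 < t).

Let mu := \sum_(j <- I) p j.

Let sum_below_mem_le N : \sum_(0 <= a < N | a \in I) p a <= mu.
Proof.
rewrite -big_filter; apply: ler_sum_subset => //; last by move=> a; rewrite mem_filter => /andP[].
by rewrite filter_uniq // iota_uniq.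
Qed.

Let mu_le1 : mu <= 1.
Proof.
apply: le_trans (p_sum_le1 (\max_(j <- I) j).+1).
apply: ler_sum_subset => //; first exact: iota_uniq.
by move=> j jI; rewrite mem_iota add0n ltnS; exact: leq_bigmax_seq.
Qed.

(* Exponential Markov inequality with the optimal exponent [lam = 4 t]. *)
Let lam := 4 * t.

Let psi a := p a * expR (lam * ((a \in I)%:R - (mu + t))).

Let psi_ge0 a : 0 <= psi a.
Proof. by rewrite mulr_ge0 ?expR_ge0. Qed.

Let weight_le_prod_psi (x : n.-tuple nat) :
  mu + t < (count (mem I) x)%:R / n%:R ->
  \prod_(i < n) p (tnth x i) <= \prod_(i < n) psi (tnth x i).
Proof.
move=> x_dev; rewrite big_split /= -expR_sum ler_peMr ?prodr_ge0 //.
apply: le_trans (expR_ge1Dx _); rewrite lerDl -mulr_sumr sumrB sumr_const card_ord.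
have -> : \sum_(i < n) ((tnth x i \in I)%:R : R) = (count (mem I) x)%:R.
  rewrite -(big_tuple _ _ x predT (fun a => (a \in I)%:R)) -sum1_count natr_sum big_mkcond.
  by rewrite [RHS]big_mkcond; apply: eq_bigr => a _ /=; case: (a \in I).
have n_pos : 0 < n%:R :> R by rewrite ltr0n.
rewrite mulr_ge0 ?subr_ge0 ?(ltW (_ : (mu + t) *+ n < _)) //; first by rewrite mulr_ge0 // ltW.
by move: x_dev; rewrite ltr_pdivlMr // mulr_natr.
Qed.

Let sum_psi_le N : \sum_(0 <= a < N) psi a <= expR (- (2 * t ^+ 2)).
Proof.
have psiE a : psi a = expR (- (lam * (mu + t))) * (p a + (a \in I)%:R * (p a * (expR lam - 1))).
  by rewrite /psi mulrBr expRD; case: (a \in I); rewrite ?mulr1 ?mulr0 ?expR0 /=; ring.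
have lam_ge0 : 0 <= lam by rewrite mulr_ge0 // ltW.
have mu_ge0 : 0 <= mu by exact: sumr_ge0.
have sumI : \sum_(0 <= a < N) (a \in I)%:R * (p a * (expR lam - 1))
    = (expR lam - 1) * \sum_(0 <= a < N | a \in I) p a.
  rewrite [in RHS]big_mkcond mulr_sumr; apply: eq_bigr => a _.
  by case: (a \in I); rewrite ?mul1r ?mul0r ?mulr0 // mulrC.
rewrite (eq_bigr _ (fun a _ => psiE a)) -mulr_sumr big_split /= sumI.
have expR_lam : 0 <= expR lam - 1 by have := expR_ge1Dx lam; lra.
apply: (@le_trans _ _ (expR (- (lam * (mu + t))) * (1 - mu + mu * expR lam))).
  rewrite ler_wpM2l ?expR_ge0 //.
  have := ler_wpM2l expR_lam (sum_below_mem_le N); have := p_sum_le1 N; lra.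
rewrite (le_trans (ler_wpM2l (expR_ge0 _) (bernoulli_mgf_le mu_ge0 mu_le1 lam_ge0))) //.
by rewrite -expRD ler_expR /lam; lra.
Qed.

Lemma chernoff_count (s : seq (n.-tuple nat)) : uniq s ->
  \sum_(x <- s | mu + t < (count (mem I) x)%:R / n%:R) \prod_(i < n) p (tnth x i)
    <= expR (- (2 * n%:R * t ^+ 2)).
Proof.
move=> s_uniq; pose N := \max_(x <- s) \max_(i < n) tnth x i.
apply: (@le_trans _ _ (\sum_(x <- s) \prod_(i < n) psi (tnth x i))).
  rewrite big_mkcond /=; apply: ler_sum => x _; case: ifP => [/weight_le_prod_psi //|_].
  exact: prodr_ge0.
apply: le_trans (sum_tuple_prod_le (N := N) psi_ge0 s_uniq _) _.
  move=> x xs i; apply: leq_trans (leq_bigmax i) _.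
  exact: (leq_bigmax_seq x xs (F := fun x : n.-tuple nat => \max_(i < n) tnth x i)).
apply: (@le_trans _ _ (expR (- (2 * t ^+ 2)) ^+ n)).
  by apply: lerXn2r; rewrite ?nnegrE ?sumr_ge0 ?expR_ge0 // -(big_mkord xpredT) sum_psi_le.
by rewrite -expRM_natl ler_expR; lra.
Qed.

End Chernoff.

Section Empirical.
Variables (R : realType) (n : nat) (x : n.-tuple nat).

Lemma empirical_ge0 i : 0 <= (empirical x i : R).
Proof. by rewrite /empirical divr_ge0. Qed.

Lemma sum_empirical (I : seq nat) : uniq I ->
  \sum_(i <- I) (empirical x i : R) = (count (mem I) x)%:R / n%:R.
Proof.
by move=> uI; rewrite /empirical -mulr_suml -natr_sum sum_count_mem.
Qed.

Lemma empirical_finite_distr : (0 < n)%N ->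
  exists M, (forall i, (M <= i)%N -> empirical x i = 0 :> R) /\
            \sum_(0 <= i < M) (empirical x i : R) = 1.
Proof.
move=> n_gt0; exists (\max_(a <- x) a).+1; split.
  move=> i Mi; rewrite /empirical (_ : count _ _ = 0%N) ?mul0r //.
  apply/count_memPn/negP => /leq_bigmax_seq /(_ isT) le_i.
  by move: Mi; rewrite ltnNge le_i.
rewrite sum_empirical ?iota_uniq // (@eq_in_count _ _ predT) ?count_predT ?size_tuple.
  by rewrite divff // pnatr_eq0 -lt0n.
by move=> a ax; rewrite /= mem_iota add0n ltnS leq_bigmax_seq.
Qed.

End Empirical.

Lemma esum_nat_lt_partial (R : realType) (f : nat -> R) (a : R) :
  (forall i, 0 <= f i) -> (a%:E < \esum_(i in [set: nat]) (f i)%:E)%E ->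
  exists N0, forall N, (N0 <= N)%N -> a < \sum_(0 <= i < N) f i.
Proof.
move=> f_ge0; rewrite /esum => /ereal_sup_gt[_ [X [finX _] <-]].
rewrite fsbig_finite // sumEFin lte_fin; set s := finmap.enum_fset _ => a_lt.
exists (\max_(i <- s) i).+1 => N le_N; apply: lt_le_trans a_lt _.
apply: ler_sum_subset => //; [exact: finmap.fset_uniq | exact: iota_uniq |].
move=> i i_s; rewrite mem_index_iota /= (leq_trans _ le_N) // ltnS.
exact: leq_bigmax_seq.
Qed.

Lemma sum_absB_le_excess (R : realDomainType) (s : seq nat) (p q : nat -> R) :
  \sum_(i <- s) q i = 1 -> \sum_(i <- s) p i <= 1 ->
  \sum_(i <- s) `|q i - p i| <= 2 * \sum_(i <- s) Num.max (q i - p i) 0.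
Proof.
move=> q1 p1.
have absE i : `|q i - p i| = 2 * Num.max (q i - p i) 0 - (q i - p i).
  by case: (leP (q i - p i) 0) => h; [rewrite ler0_norm | rewrite gtr0_norm]; lra.
by rewrite (eq_bigr _ (fun i _ => absE i)) sumrB -mulr_sumr sumrB q1; lra.
Qed.

Section Excess.
Variables (R : realType) (p q : nat -> R) (M k : nat) (delta : R).
Hypotheses (p_ge0 : forall i, 0 <= p i) (p_sum_le1 : forall N, \sum_(0 <= i < N) p i <= 1)
  (q_ge0 : forall i, 0 <= q i) (q_supp : forall i, (M <= i)%N -> q i = 0)
  (q_sum1 : \sum_(0 <= i < M) q i = 1) (k_ge2 : (2 <= k)%N).

Let excess i := Num.max (q i - p i) 0.

Let tail_excess_le N : (M <= N)%N -> (k <= N)%N ->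
  \sum_(k <= i < N) excess i <= 1 - cdf_nat q k.-1.
Proof.
move=> MN kN; have := sum_distr_ge_supp q_supp q_sum1 MN.
rewrite (@big_cat_nat _ _ _ k) //= /cdf_nat prednK ?(ltnW k_ge2) // => split_q.
have : \sum_(k <= i < N) excess i <= \sum_(k <= i < N) q i.
  by apply: ler_sum => i _; rewrite ge_max q_ge0 andbT lerBlDr lerDl.
by rewrite -split_q; lra.
Qed.

Lemma exists_excess_subset : 0 < delta ->
  (delta%:E < l1dist q p)%E ->
  1 - cdf_nat q k.-1 <= delta / 3 ->
  ((forall j, (j < k)%N -> 0 < q j) -> 1 - cdf_nat q k.-1 <= delta / 6) ->
  exists2 A : {set 'I_k}, (0 < #|A| < k)%N & delta / 6 < \sum_(i in A) (q i - p i).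
Proof.
move=> delta_gt0 l1_gt tail3 tail6.
have [N0 N0P] := esum_nat_lt_partial (fun i => normr_ge0 (q i - p i)) l1_gt.
pose N := (N0 + M + k)%N.
have excess_N : delta / 2 < \sum_(0 <= i < N) excess i.
  have := N0P N (leq_trans (leq_addr M N0) (leq_addr k _)).
  have MN : (M <= N)%N := leq_trans (leq_addl N0 M) (leq_addr k _).
  have := sum_absB_le_excess (sum_distr_ge_supp q_supp q_sum1 MN) (p_sum_le1 N).
  lra.
have excess_k : delta / 2 - (1 - cdf_nat q k.-1) < \sum_(0 <= i < k) excess i.
  have := tail_excess_le (leq_trans (leq_addl N0 M) (leq_addr k _)) (leq_addl _ k).
  by move: excess_N; rewrite (@big_cat_nat _ _ _ k) ?leq_addl //=; lra.
pose A := [set i : 'I_k | p i < q i]%SET.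
have sumA : \sum_(i in A) (q i - p i) = \sum_(0 <= i < k) excess i.
  rewrite big_mkord big_mkcond; apply: eq_bigr => i _; rewrite inE /excess.
  by case: ltP => h; [rewrite max_l | rewrite max_r]; rewrite ?subr_ge0 ?subr_le0 // ltW.
have k_gt0 : (0 < k)%N := ltnW k_ge2.
have [AT | AnT] := eqVneq A [set: 'I_k]%SET; last first.
  exists A; last by rewrite sumA; lra.
  apply/andP; split; last by rewrite -[X in (_ < X)%N](card_ord k) -cardsT proper_card ?properT.
  rewrite card_gt0; apply/negP => /eqP A0.
  by move: excess_k; rewrite -sumA A0 big_set0; lra.
(* [q > p >= 0] on all of [[0, k)], so the sharper tail bound applies; then
   either [{0}] or its complement carries half of the excess. *)
have q_gt0 j : (j < k)%N -> 0 < q j.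
  move=> jk; have : Ordinal jk \in A by rewrite AT inE.
  by rewrite inE; exact: le_lt_trans (p_ge0 j).
have sum_gt : delta / 3 < \sum_(i in A) (q i - p i) by rewrite sumA; have := tail6 q_gt0; lra.
pose i0 : 'I_k := Ordinal k_gt0.
rewrite (bigD1 i0) ?AT ?inE //= in sum_gt.
have [i0_gt | i0_le] := ltrP (delta / 6) (q 0 - p 0).
  by exists [set i0]%SET; rewrite ?cards1 ?big_set1.
exists [set~ i0]%SET; first by rewrite cardsC1 card_ord; have := k_ge2; lia.
rewrite (eq_bigl (fun i => (i \in [set: 'I_k]%SET) && (i != i0))) => [|i]; last by rewrite !inE.
lra.
Qed.

End Excess.

Lemma card_nontrivial_subsets k : (0 < k)%N ->
  #|[pred A : {set 'I_k} | (0 < #|A| < k)%N]| = (2 ^ k - 2)%N.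
Proof.
move=> k_gt0.
have -> : #|[pred A : {set 'I_k} | (0 < #|A| < k)%N]|
    = #|[predD1 predC1 [set: 'I_k]%SET & finset.set0]|.
  apply: eq_card => A; rewrite !inE card_gt0; congr (_ && _).
  by rewrite eqEcard finset.subsetT cardsT card_ord -ltnNge.
have set0_neqT : finset.set0 != [set: 'I_k]%SET.
  by apply/eqP => /setP/(_ (Ordinal k_gt0)); rewrite !inE.
have := cardD1 finset.set0 (predC1 [set: 'I_k]%SET).
rewrite cardC1 -cardsT -powersetT card_powerset cardsT card_ord !inE set0_neqT add1n.
by move=> /(congr1 predn) /= <-; rewrite subn2.
Qed.

Lemma ler_sum_union_bound (R : numDomainType) (T : eqType) (I : finType) (s : seq T)
    (P : pred I) (C : I -> pred T) (w : T -> R) :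
  (forall x, 0 <= w x) -> (forall x, x \in s -> exists2 A, P A & C A x) ->
  \sum_(x <- s) w x <= \sum_(A in P) \sum_(x <- s | C A x) w x.
Proof.
move=> w_ge0 cover.
rewrite [X in _ <= X](eq_bigr (fun A => \sum_(x <- s) (if C A x then w x else 0))) => [|A _];
  last exact: big_mkcond.
rewrite exchange_big /= big_seq [X in _ <= X]big_seq.
apply: ler_sum => x xs; have [A PA CAx] := cover x xs.
rewrite (bigD1 A) //= CAx lerDl; apply: sumr_ge0 => B _.
by case: ifP.
Qed.

Lemma iid_prob_le (R : realType) (p : nat -> R) n (E : set (n.-tuple nat)) (c : R) :
  (forall s : seq (n.-tuple nat), uniq s -> (forall x, x \in s -> E x) ->
    \sum_(x <- s) \prod_(i < n) p (tnth x i) <= c) ->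
  (iid_prob p E <= c%:E)%E.
Proof.
move=> le_c; rewrite /iid_prob /esum; apply: ub_ereal_sup => _ [F [finF FE] <-].
rewrite fsbig_finite // sumEFin lee_fin; apply: le_c; first exact: finmap.fset_uniq.
by move=> x; rewrite in_fset_set // => /set_mem /FE.
Qed.

Lemma is_distr_sum_le1 (R : realType) (p : nat -> R) :
  is_distr p -> forall N, \sum_(0 <= i < N) p i <= 1.
Proof.
move=> [_ p1] N; rewrite -lee_fin -p1 -sumEFin; apply: esum_ge.
exists [set` index_iota 0 N]; first by split => //; exact: finite_seq.
by rewrite fsbig_seq // iota_uniq.
Qed.

Lemma empirical_excess_subset (R : realType) (p : nat -> R) (delta : R) (k n : nat)
    (x : n.-tuple nat) :
  (forall i, 0 <= p i) -> (forall N, \sum_(0 <= i < N) p i <= 1) ->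
  0 < delta -> (2 <= k)%N -> (0 < n)%N ->
  (delta%:E < l1dist (empirical x) p)%E ->
  (2%:E * Finv (empirical x) (1 - delta / 6) <= k%:R%:E)%E ->
  exists2 A : {set 'I_k}, (0 < #|A| < k)%N &
    \sum_(j <- [seq val i | i in A]) p j + delta / 6
      < (count (mem [seq val i | i in A]) x)%:R / n%:R.
Proof.
move=> p_ge0 p_sum_le1 delta_gt0 k_ge2 n_gt0 l1_gt Finv_le.
have [M [q_supp q_sum1]] := empirical_finite_distr R x n_gt0.
have q_ge0 := empirical_ge0 R x.
have x_lt1 : 1 - delta / 6 < 1 by lra.
have tail3 : 1 - cdf_nat (empirical x) k.-1 <= delta / 3.
  by have := tail_le_Finv q_ge0 q_supp q_sum1 k_ge2 x_lt1 Finv_le; lra.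
have tail6 : (forall j, (j < k)%N -> 0 < (empirical x j : R)) ->
    1 - cdf_nat (empirical x) k.-1 <= delta / 6.
  by move=> q_gt0; have := le_cdf_Finv q_ge0 q_supp q_sum1 k_ge2 x_lt1 Finv_le q_gt0; lra.
have [A A_nontriv A_exc] := exists_excess_subset p_ge0 p_sum_le1 q_ge0 q_supp q_sum1 k_ge2
  delta_gt0 l1_gt tail3 tail6.
exists A => //; rewrite -sum_empirical; last by rewrite map_inj_uniq ?enum_uniq //; exact: val_inj.
by rewrite !big_image; move: A_exc; rewrite sumrB; lra.
Qed.

Unset Implicit Arguments. Set Strict Implicit.

Theorem lemma4 (R : realType) (p : nat -> R) (delta : R) (k n : nat) :
  is_distr p -> 0 < delta -> (2 <= k)%N -> (0 < n)%N ->
  (iid_prob p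
     [set x : n.-tuple nat |
        (delta%:E < l1dist (empirical x) p)%E /\
        (2%:E * Finv (empirical x) (1 - delta / 6) <= k%:R%:E)%E]
   <= ((2 ^+ k - 2) * expR (- (n%:R * delta ^+ 2) / 18))%:E)%E.
Proof.
move=> p_distr delta_gt0 k_ge2 n_gt0; have [p_ge0 _] := p_distr.
have p_sum_le1 := is_distr_sum_le1 p_distr.
pose idx (A : {set 'I_k}) := [seq val i | i in A].
pose dev A (x : n.-tuple nat) :=
  \sum_(j <- idx A) p j + delta / 6 < (count (mem (idx A)) x)%:R / n%:R.
have w_ge0 (x : n.-tuple nat) : 0 <= \prod_(i < n) p (tnth x i) by exact: prodr_ge0.
have d6_gt0 : 0 < delta / 6 by lra.
apply: iid_prob_le => s s_uniq s_event.
apply: (le_trans (ler_sum_union_bound (P := [pred A : {set 'I_k} | (0 < #|A| < k)%N])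
  (C := dev) w_ge0 _)).
  by move=> x /s_event[l1_gt Finv_le]; exact: empirical_excess_subset.
have idx_uniq A : uniq (idx A) by rewrite map_inj_uniq ?enum_uniq //; exact: val_inj.
apply: (le_trans (ler_sum _ (fun A _ =>
  chernoff_count p_ge0 p_sum_le1 n_gt0 (idx_uniq A) d6_gt0 s_uniq))).
rewrite sumr_const card_nontrivial_subsets ?(ltnW k_ge2) // -[X in X <= _]mulr_natl.
rewrite natrB ?natrX; last by rewrite -[1%N](expn0 2) ltn_exp2l // ltnW.
suff -> : - (2 * n%:R * (delta / 6) ^+ 2) = - (n%:R * delta ^+ 2) / 18 by [].
by field.
Qed.
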